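(* Let $M$ be a $\mathfrak p(n)$-supermodule and $a\ge1$. Label the tensor factors of $M\otimes V^{\otimes a}$ by $0,1,\dots,a$ and for $1\le j\le a$ set $Y_j=\sum_{i=0}^{j-1}\Omega_{ij}\in\mathrm{End}_{\mathfrak p(n)}(M\otimes V^{\otimes a})$. Then the operators $Y_1,\dots,Y_a$ pairwise commute.
   Context: Work over $\mathbb C$, $n\ge1$. Let $V=\mathbb C^{n|n}$ with even basis $v_1,\dots,v_n$ and odd basis $v_{1'},\dots,v_{n'}$; $\mathfrak{gl}(n|n)=\mathrm{End}(V)$ with matrix units $E_{rs}$. Let $\beta$ be the odd symmetric form on $V$ with $\beta(v_i,v_{j'})=\beta(v_{j'},v_i)=\delta_{ij}$ and zero on $V_{\bar0}\otimes V_{\bar0}$, $V_{\bar1}\otimes V_{\bar1}$; $\mathfrak p(n)\subset\mathfrak{gl}(n|n)$ is the subalgebra spanned by homogeneous $x$ with $\beta(xu,v)+(-1)^{\bar x\bar u}\beta(u,xv)=0$. Put $A^\pm_{ij}=E_{ij}\pm E_{j'i'}$, $B^\pm_{ij}=E_{ij'}\pm E_{ji'}$, $C^\pm_{ij}=E_{i'j}\pm E_{j'i}$, and $\Omega=\sum_{i,j}A^-_{ij}\otimes A^+_{ji}-\tfrac12\sum_iB^+_{ii}\otimes C^+_{ii}-\sum_{i<j}B^+_{ij}\otimes C^+_{ji}+\sum_{i<j}C^-_{ij}\otimes B^-_{ji}\in\mathfrak p(n)\otimes\mathfrak{gl}(n|n)$. $\Omega_{ij}$ ($i<j$) denotes the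 operator acting by the first tensor leg of $\Omega$ on factor $i$ (a $\mathfrak p(n)$-module) and the second leg on factor $j$ (a copy of $V$), identity elsewhere, with the Koszul sign rule $(x\otimes y)(m\otimes v)=(-1)^{\bar y\bar m}xm\otimes yv$. *)

From HB Require Import structures.
From mathcomp Require Import all_boot all_order all_algebra.

Set Implicit Arguments.
Unset Strict Implicit.
Unset Printing Implicit Defensive.

Import GRing.Theory Num.Theory.
Local Open Scope ring_scope.

Section PnDefs.

Variable F : fieldType.
Variable n : nat.

(* Basis of V = F^{n|n}: indices 'I_(n+n); v_i = lshift, v_{i'} = rshift. *)
Definition ipar (k : 'I_(n + n)) : bool := (n <= k)%N.
Definition ev (i : 'I_n) : 'I_(n + n) := lshift n i.
Definition od (i : 'I_n) : 'I_(n + n) := rshift n i.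

Definition homog (p : bool) (x : 'M[F]_(n + n)) : Prop :=
  forall r s, (ipar r (+) ipar s) != p -> x r s = 0.

Definition homog_vec (q : bool) (u : 'cV[F]_(n + n)) : Prop :=
  forall r, ipar r != q -> u r 0 = 0.

Definition beta (u v : 'cV[F]_(n + n)) : F :=
  \sum_(i < n) (u (ev i) 0 * v (od i) 0 + u (od i) 0 * v (ev i) 0).

Definition preserves_beta (p : bool) (x : 'M[F]_(n + n)) : Prop :=
  forall (q : bool) (u v : 'cV[F]_(n + n)), homog_vec q u ->
    beta (x *m u) v + (-1) ^+ (p && q) * beta u (x *m v) = 0.

Definition in_pn (x : 'M[F]_(n + n)) : Prop :=
  exists x0 x1, [/\ x = x0 + x1, homog false x0, homog true x1,
                    preserves_beta false x0 & preserves_beta true x1].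

Definition Emu (r s : 'I_(n + n)) : 'M[F]_(n + n) := delta_mx r s.

Definition Ap (i j : 'I_n) := Emu (ev i) (ev j) + Emu (od j) (od i).
Definition Am (i j : 'I_n) := Emu (ev i) (ev j) - Emu (od j) (od i).
Definition Bp (i j : 'I_n) := Emu (ev i) (od j) + Emu (ev j) (od i).
Definition Bm (i j : 'I_n) := Emu (ev i) (od j) - Emu (ev j) (od i).
Definition Cp (i j : 'I_n) := Emu (od i) (ev j) + Emu (od j) (ev i).
Definition Cm (i j : 'I_n) := Emu (od i) (ev j) - Emu (od j) (ev i).

(* Given the action act1 of the first tensor leg and act2 of the second
   tensor leg (as operators on a space W), the operator of Omega, where
   x (x) y acts as act1 x \o act2 y (Koszul signs are built into act1/act2). *)
Definition Omega_op (W : lmodType F)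
    (act1 act2 : 'M[F]_(n + n) -> W -> W) (f : W) : W :=
    \sum_(i < n) \sum_(j < n) act1 (Am i j) (act2 (Ap j i) f)
  - 2%:R^-1 *: \sum_(i < n) act1 (Bp i i) (act2 (Cp i i) f)
  - \sum_(i < n) \sum_(j < n | (i < j)%N) act1 (Bp i j) (act2 (Cp j i) f)
  + \sum_(i < n) \sum_(j < n | (i < j)%N) act1 (Cm i j) (act2 (Bm j i) f).

Definition evpart (y : 'M[F]_(n + n)) : 'M[F]_(n + n) :=
  \matrix_(r, s) (if ipar r == ipar s then y r s else 0).
Definition oddpart (y : 'M[F]_(n + n)) : 'M[F]_(n + n) := y - evpart y.

Section Module.

Variables M0 M1 : lmodType F.
Local Notation SM := (M0 * M1)%type.

Definition sigmaM (m : SM) : SM := (m.1, - m.2).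

(* p(n)-supermodule structure given by rho : gl(n|n) -> End(M),
   only its values on p(n) matter. *)
Definition is_pn_supermodule (rho : 'M[F]_(n + n) -> SM -> SM) : Prop :=
  [/\
      forall x (c : F) (m m' : SM), rho x (c *: m + m') = c *: rho x m + rho x m',
      forall (c : F) x y (m : SM), in_pn x -> in_pn y ->
        rho (c *: x + y) m = c *: rho x m + rho y m,
      forall x, in_pn x -> homog false x ->
        (forall m0 : M0, (rho x (m0, 0)).2 = 0) /\
        (forall m1 : M1, (rho x (0, m1)).1 = 0),
      forall x, in_pn x -> homog true x ->
        (forall m0 : M0, (rho x (m0, 0)).1 = 0) /\
        (forall m1 : M1, (rho x (0, m1)).2 = 0)
    &
      forall (p q : bool) x y (m : SM), in_pn x -> in_pn y -> homog p x -> homog q y ->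
        rho (x *m y - (-1) ^+ (p && q) *: (y *m x)) m
        = rho x (rho y m) - (-1) ^+ (p && q) *: rho y (rho x m)].

Variable a : nat.

(* Model of M (x) V^{(x) a}: f represents sum_w f(w) (x) v_{w 0} (x) ... (x) v_{w (a-1)};
   tuple position t : 'I_a is tensor factor t+1. *)
Local Notation idx := {ffun 'I_a -> 'I_(n + n)}.
Definition TS := {ffun idx -> SM}.

Definition upd (w : idx) (t : 'I_a) (k : 'I_(n + n)) : idx :=
  [ffun s => if s == t then k else w s].

Definition sgn_before (w : idx) (t : 'I_a) : F :=
  \prod_(s < a | (s < t)%N) (-1) ^+ ipar (w s).

Definition act_hom (y : 'M[F]_(n + n)) (odd : bool) (t : 'I_a) (f : TS) : TS :=
  [ffun w : idx => \sum_(k < n + n) y (w t) k *: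
      (if odd then sgn_before w t *: sigmaM (f (upd w t k)) else f (upd w t k))].

Definition actV (y : 'M[F]_(n + n)) (t : 'I_a) (f : TS) : TS :=
  act_hom (evpart y) false t f + act_hom (oddpart y) true t f.

Definition actM (rho : 'M[F]_(n + n) -> SM -> SM) (x : 'M[F]_(n + n)) (f : TS) : TS :=
  [ffun w : idx => rho x (f w)].

Definition Omega0 rho (t : 'I_a) : TS -> TS :=
  Omega_op (actM rho) (fun y => actV y t).

Definition OmegaVV (s t : 'I_a) : TS -> TS :=
  Omega_op (fun x => actV x s) (fun y => actV y t).

Definition Yop rho (t : 'I_a) (f : TS) : TS :=
  Omega0 rho t f + \sum_(s < a | (s < t)%N) OmegaVV s t f.

End Module.
End PnDefs.

(* Let tau be the super anti-involution of gl(n|n) defined by beta; p(n) is its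
   fixed space and y |-> y + tau y maps onto it. In the basis of matrix units,
   Omega_(ij) = sum_(r,s) (-1)^|s| (E_rs + tau E_rs)_i (E_sr)_j, a "half Casimir"
   pairing p(n) with gl(n|n). Since tau commutes with super brackets by elements
   of p(n), this tensor is invariant: it commutes with the diagonal action of
   p(n) on the two legs. Now Y_j is the half Casimir between the diagonal action
   of p(n) on the factors 0, ..., j-1 and gl(n|n) on factor j. For k < j, Y_k
   commutes with the diagonal action of p(n) on the factors 0, ..., k by
   invariance, and with operators on the factors k+1, ..., j because it acts
   only on the factors 0, ..., k (the Koszul signs cancel since Y_k is even);
   hence Y_k commutes with every summand of Y_j. *)

From HB Require Import structures.
From mathcomp Require Import all_boot all_order all_algebra.
From mathcomp Require Import ring.
Import GRing.Theory Num.Theory.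
Local Open Scope ring_scope.

Set Implicit Arguments.
Unset Strict Implicit.
Unset Printing Implicit Defensive.

Section LinearFun.
Variables (R : pzRingType) (U V : lmodType R) (T : U -> V).
Hypothesis linT : linear T.

Let Tl : {linear U -> V} := HB.pack T (GRing.isLinear.Build _ _ _ _ T linT).

Lemma linfun0 : T 0 = 0. Proof. exact: (raddf0 Tl). Qed.
Lemma linfunD u v : T (u + v) = T u + T v. Proof. exact: (raddfD Tl). Qed.
Lemma linfunB u v : T (u - v) = T u - T v. Proof. exact: (raddfB Tl). Qed.
Lemma linfunZ c u : T (c *: u) = c *: T u. Proof. exact: (linearZ_LR Tl). Qed.

Lemma linfun_sum (J : Type) (r : seq J) (P : pred J) (G : J -> U) :
  T (\sum_(j <- r | P j) G j) = \sum_(j <- r | P j) T (G j).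
Proof. exact: (raddf_sum Tl). Qed.

Lemma linfun_sumZ (J : Type) (r : seq J) (P : pred J) (c : J -> R) (G : J -> U) :
  T (\sum_(j <- r | P j) c j *: G j) = \sum_(j <- r | P j) c j *: T (G j).
Proof. by rewrite linfun_sum; apply: eq_bigr => j _; rewrite linfunZ. Qed.

End LinearFun.

Lemma sign_sq (R : pzRingType) (b : bool) : (-1) ^+ b * (-1) ^+ b = 1 :> R.
Proof. by rewrite -signr_addb addbb. Qed.

Section DualBasis.
Variables (F : fieldType) (n : nat).
Local Notation I := 'I_(n + n).

(* [dual k] is the index paired with [k] by beta: [v_i <-> v_i']. *)
Definition dual (k : I) : I := match split k with inl i => od i | inr i => ev i end.

Lemma ipar_ev (i : 'I_n) : ipar (ev i) = false.
Proof. by rewrite /ipar /ev /= leqNgt ltn_ord. Qed.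
Lemma ipar_od (i : 'I_n) : ipar (od i) = true.
Proof. by rewrite /ipar /od /= leq_addr. Qed.

Lemma dual_ev (i : 'I_n) : dual (ev i) = od i.
Proof. by rewrite /dual; have -> : split (ev i) = inl i := unsplitK (inl i). Qed.
Lemma dual_od (i : 'I_n) : dual (od i) = ev i.
Proof. by rewrite /dual; have -> : split (od i) = inr i := unsplitK (inr i). Qed.

Lemma ev_od_ind (P : I -> Prop) :
  (forall i, P (ev i)) -> (forall i, P (od i)) -> forall k, P k.
Proof.
by move=> Pev Pod k; rewrite -(splitK k); case: (split k) => i; [apply: Pev | apply: Pod].
Qed.

Lemma dualK : involutive dual.
Proof. by move=> k; move: k; apply: ev_od_ind => i; rewrite ?dual_ev ?dual_od ?dual_ev. Qed.
Lemma dual_inj : injective dual. Proof. exact: inv_inj dualK. Qed.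
Lemma ipar_dual k : ipar (dual k) = ~~ ipar k.
Proof. by move: k; apply: ev_od_ind => i; rewrite ?dual_ev ?dual_od ?ipar_ev ?ipar_od. Qed.
Lemma dual_eqE u r : (dual u == r) = (u == dual r).
Proof. by rewrite -(inj_eq dual_inj) dualK. Qed.

Lemma sum_ev_od (V : zmodType) (G : 'I_(n + n) -> V) :
  \sum_(k < n + n) G k = \sum_(i < n) G (ev i) + \sum_(i < n) G (od i).
Proof. exact: big_split_ord. Qed.

Lemma betaE (u v : 'cV[F]_(n + n)) : beta u v = \sum_(k < n + n) u k 0 * v (dual k) 0.
Proof.
rewrite /beta sum_ev_od big_split /=.
by congr (_ + _); apply: eq_bigr => i _; rewrite ?dual_ev ?dual_od.
Qed.

End DualBasis.

Arguments dualK {n}.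
Arguments dual_inj {n}.

Section Homogeneous.
Variables (F : fieldType) (n : nat).
Local Notation M := 'M[F]_(n + n).

Lemma homog_delta r s : homog (ipar r (+) ipar s) (delta_mx r s : M).
Proof.
move=> u v; rewrite mxE.
by have [-> | //] := eqVneq u r; have [-> | //] := eqVneq v s; rewrite eqxx.
Qed.

Lemma homogD p (x y : M) : homog p x -> homog p y -> homog p (x + y).
Proof. by move=> hx hy r s H; rewrite mxE hx // hy // addr0. Qed.
Lemma homogZ p c (x : M) : homog p x -> homog p (c *: x).
Proof. by move=> hx r s H; rewrite mxE hx // mulr0. Qed.
Lemma homogB p (x y : M) : homog p x -> homog p y -> homog p (x - y).
Proof. by move=> hx hy; apply: homogD => // r s H; rewrite mxE hy // oppr0. Qed.

Lemma homogM p q (x y : M) : homog p x -> homog q y -> homog (p (+) q) (x *m y).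
Proof.
move=> hx hy r s H; rewrite !mxE big1 // => u _.
have [h|h] := boolP ((ipar r (+) ipar u) == p); last by rewrite hx ?mul0r.
rewrite hy ?mulr0 //; move: H h; clear hx hy.
by case: (ipar r); case: (ipar u); case: (ipar s); case: p; case: q.
Qed.

Lemma evpart_homog (y : M) : homog false (evpart y).
Proof. by move=> r s; rewrite mxE; case: (ipar r); case: (ipar s). Qed.

Lemma oddpart_homog (y : M) : homog true (oddpart y).
Proof.
by move=> r s; rewrite /oddpart !mxE; case: (ipar r); case: (ipar s) => //= _; rewrite subrr.
Qed.

Lemma evpart_even (y : M) : homog false y -> evpart y = y.
Proof.
move=> hy; apply/matrixP => r s; rewrite mxE; case: eqP => // ne.
by rewrite hy //; move: ne; case: (ipar r); case: (ipar s).
Qed.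

Lemma evpart_odd (y : M) : homog true y -> evpart y = 0.
Proof.
move=> hy; apply/matrixP => r s; rewrite !mxE; case: eqP => // e.
by rewrite hy // e; case: (ipar s).
Qed.

Lemma evpart_linear : linear (@evpart F n).
Proof. by move=> c y z; apply/matrixP => r s; rewrite !mxE; case: ifP; rewrite ?mulr0 ?addr0. Qed.

Lemma oddpart_linear : linear (@oddpart F n).
Proof. by move=> c y z; rewrite /oddpart evpart_linear scalerBr opprD addrACA. Qed.

Definition sbr (p q : bool) (x y : M) : M := x *m y - (-1) ^+ (p && q) *: (y *m x).

Lemma sbrDr p q x y z : sbr p q x (y + z) = sbr p q x y + sbr p q x z.
Proof. by rewrite /sbr mulmxDr mulmxDl scalerDr opprD addrACA. Qed.

Lemma homog_sbr p q (x y : M) : homog p x -> homog q y -> homog (p (+) q) (sbr p q x y).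
Proof.
move=> hx hy; apply: homogB; first exact: homogM.
by apply: homogZ; rewrite addbC; apply: homogM.
Qed.

End Homogeneous.

Section SuperTranspose.
Variables (F : fieldType) (n : nat).
Local Notation I := 'I_(n + n).
Local Notation M := 'M[F]_(n + n).

Definition tau_sign (r s : I) : F := if ~~ ipar r && ipar s then 1 else -1.

Definition tau (y : M) : M := \matrix_(r, s) (tau_sign r s * y (dual s) (dual r)).
Definition tau_sym (y : M) : M := y + tau y.

Lemma tauE y r s : tau y r s = tau_sign r s * y (dual s) (dual r).
Proof. by rewrite mxE. Qed.

Lemma tau_linear : linear tau.
Proof. by move=> c y z; apply/matrixP => r s; rewrite !mxE; ring. Qed.

Lemma tauK : involutive tau.
Proof.
move=> y; apply/matrixP => r s; rewrite !mxE !dualK /tau_sign !ipar_dual.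
by case: (ipar r); case: (ipar s) => /=; ring.
Qed.

Lemma tau_sym_linear : linear tau_sym.
Proof. by move=> c y z; rewrite /tau_sym tau_linear scalerDr addrACA. Qed.

Lemma tau_tau_sym y : tau (tau_sym y) = tau_sym y.
Proof. by rewrite /tau_sym (linfunD tau_linear) tauK addrC. Qed.

Lemma homog_tau q y : homog q y -> homog q (tau y).
Proof.
move=> hy r s H; rewrite tauE hy ?mulr0 // !ipar_dual; move: H; clear hy.
by case: (ipar r); case: (ipar s); case: q.
Qed.

Lemma homog_tau_sym q y : homog q y -> homog q (tau_sym y).
Proof. by move=> hy; apply: homogD => //; apply: homog_tau. Qed.

Lemma tau_delta r s :
  tau (delta_mx r s) = tau_sign (dual s) (dual r) *: (delta_mx (dual s) (dual r) : M).
Proof.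
apply/matrixP=> u v; rewrite !mxE !dual_eqE andbC.
by have [->|] := eqVneq u (dual s); have [->|] := eqVneq v (dual r); rewrite ?mulr0.
Qed.

Lemma tauM p q (x y : M) : homog p x -> homog q y ->
  tau (x *m y) = - (-1) ^+ (p && q) *: (tau y *m tau x).
Proof.
move=> hx hy; apply/matrixP => r s; rewrite !mxE [in RHS](reindex_inj dual_inj) /=.
rewrite mulr_sumr mulr_sumr; apply: eq_bigr => u _; rewrite !tauE !dualK.
case: (eqVneq (ipar (dual s) (+) ipar u) p) => [hp | /hx ->]; last by ring.
case: (eqVneq (ipar u (+) ipar (dual r)) q) => [hq | /hy ->]; last by ring.
rewrite -hp -hq /tau_sign !ipar_dual.
by case: (ipar r); case: (ipar s); case: (ipar u) => /=; ring.
Qed.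

Lemma tau_sbr p q x y : homog p x -> homog q y -> tau (sbr p q x y) = sbr p q (tau x) (tau y).
Proof.
move=> hx hy; rewrite /sbr (linfunB tau_linear) (linfunZ tau_linear).
rewrite (tauM hx hy) (tauM hy hx) andbC !scaleNr scalerN scalerA sign_sq scale1r.
by rewrite opprK addrC.
Qed.

Lemma tau_sym_sbr p q x y : homog p x -> homog q y -> tau x = x ->
  tau_sym (sbr p q x y) = sbr p q x (tau_sym y).
Proof. by move=> hx hy tx; rewrite /tau_sym tau_sbr // tx sbrDr. Qed.

Definition beta_skew p (x : M) :=
  forall r s, x r s = - (-1) ^+ (p && ipar s) * x (dual s) (dual r).

Lemma beta_skew_tau_sym q y : homog q y -> beta_skew q (tau_sym y).
Proof.
move=> hy r s; rewrite !mxE !dualK.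
case: (eqVneq (ipar r (+) ipar s) q) => [hq|hq].
  by rewrite -hq /tau_sign !ipar_dual; case: (ipar r); case: (ipar s) => /=; ring.
rewrite (hy r s hq) hy; first by ring.
by rewrite !ipar_dual; move: hq; case: (ipar r); case: (ipar s).
Qed.

Lemma beta_skew_preserves p x : beta_skew p x -> preserves_beta p x.
Proof.
move=> skx q u v hu; rewrite !betaE.
have -> : \sum_(k < n + n) (x *m u) k 0 * v (dual k) 0
        = \sum_(j < n + n) \sum_(k < n + n) x k j * u j 0 * v (dual k) 0.
  rewrite exchange_big; apply: eq_bigr => k _; rewrite mxE mulr_suml.
  by apply: eq_bigr.
have -> : \sum_(k < n + n) u k 0 * (x *m v) (dual k) 0
        = \sum_(j < n + n) \sum_(k < n + n) u j 0 * x (dual j) (dual k) * v (dual k) 0.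
  apply: eq_bigr => j _; rewrite mxE mulr_sumr (reindex_inj dual_inj) /=.
  by apply: eq_bigr => k _; rewrite mulrA.
rewrite mulr_sumr -big_split /= big1 // => j _.
rewrite mulr_sumr -big_split /= big1 // => k _ /=.
case: (eqVneq (ipar j) q) => [hj | /hu ->]; last by rewrite !(mul0r, mulr0, addr0).
by rewrite (skx k j) -hj; set sg := (-1) ^+ _; ring.
Qed.

Lemma in_pn_tau_sym (y : M) : in_pn (tau_sym y).
Proof.
exists (tau_sym (evpart y)), (tau_sym (oddpart y)); split.
- by rewrite -(linfunD tau_sym_linear) /oddpart addrC subrK.
- exact/homog_tau_sym/evpart_homog.
- exact/homog_tau_sym/oddpart_homog.
- exact/beta_skew_preserves/beta_skew_tau_sym/evpart_homog.
- exact/beta_skew_preserves/beta_skew_tau_sym/oddpart_homog.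
Qed.

Lemma in_pn0 : in_pn (0 : M).
Proof. by have := in_pn_tau_sym 0; rewrite /tau_sym (linfun0 tau_linear) addr0. Qed.

Lemma tau_sym_ee (i j : 'I_n) : tau_sym (delta_mx (ev i) (ev j)) = Am F i j.
Proof. by rewrite /tau_sym tau_delta !dual_ev /tau_sign !ipar_od /= scaleN1r. Qed.
Lemma tau_sym_eo (i j : 'I_n) : tau_sym (delta_mx (ev i) (od j)) = Bp F i j.
Proof. by rewrite /tau_sym tau_delta dual_ev dual_od /tau_sign ipar_od ipar_ev /= scale1r. Qed.
Lemma tau_sym_oe (i j : 'I_n) : tau_sym (delta_mx (od i) (ev j)) = Cm F i j.
Proof. by rewrite /tau_sym tau_delta dual_ev dual_od /tau_sign ipar_od ipar_ev /= scaleN1r. Qed.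
Lemma tau_sym_oo (i j : 'I_n) : tau_sym (delta_mx (od i) (od j)) = - Am F j i.
Proof. by rewrite /tau_sym tau_delta !dual_od /tau_sign !ipar_ev /= scaleN1r /Am opprB. Qed.

Lemma in_pn_Am (i j : 'I_n) : in_pn (Am F i j).
Proof. by rewrite -tau_sym_ee; apply: in_pn_tau_sym. Qed.
Lemma in_pn_Cm (i j : 'I_n) : in_pn (Cm F i j).
Proof. by rewrite -tau_sym_oe; apply: in_pn_tau_sym. Qed.

End SuperTranspose.

Arguments in_pn0 {F n}.

Section Casimir.
Variables (F : fieldType) (n : nat) (W : lmodType F).
Local Notation M := 'M[F]_(n + n).
Local Notation E := (@delta_mx F (n + n) (n + n)).

Definition casimir (X Z : M -> W -> W) (g : W) : W :=
  \sum_(r < n + n) \sum_(s < n + n) (-1) ^+ (ipar s) *: X (E r s) (Z (E s r) g).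

Lemma casimir_linear X Z : (forall y, linear (X y)) -> (forall y, linear (Z y)) ->
  linear (casimir X Z).
Proof.
move=> linX linZ c f g; rewrite /casimir scaler_sumr -big_split; apply: eq_bigr => r _ /=.
rewrite scaler_sumr -big_split; apply: eq_bigr => s _ /=.
by rewrite linZ linX scalerDr !scalerA mulrC.
Qed.

Lemma mulmx_delta (x : M) r s : x *m E r s = \sum_(u < n + n) x u r *: E u s.
Proof.
apply/matrixP => i j; rewrite mxE summxE.
case: (eqVneq j s) => [->|njs].
  rewrite (bigD1 r) //= big1 => [|k /negbTE nk]; last by rewrite mxE nk mulr0.
  rewrite addr0 mxE !eqxx mulr1 (bigD1 i) //= big1 => [|k /negbTE nk].
    by rewrite !mxE !eqxx addr0 mulr1.
  by rewrite !mxE eq_sym nk mulr0.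
rewrite big1 => [|k _]; last by rewrite mxE (negbTE njs) andbF mulr0.
by rewrite big1 // => k _; rewrite !mxE (negbTE njs) andbF mulr0.
Qed.

Lemma delta_mulmx (x : M) r s : E r s *m x = \sum_(v < n + n) x s v *: E r v.
Proof.
apply/matrixP => i j; rewrite mxE summxE.
case: (eqVneq i r) => [->|nir].
  rewrite (bigD1 s) //= big1 => [|k /negbTE nk]; last by rewrite mxE nk andbF mul0r.
  rewrite addr0 mxE !eqxx mul1r (bigD1 j) //= big1 => [|k /negbTE nk].
    by rewrite !mxE !eqxx addr0 mulr1.
  by rewrite !mxE eqxx (eq_sym j) nk mulr0.
rewrite big1 => [|k _]; last by rewrite mxE (negbTE nir) mul0r.
by rewrite big1 // => k _; rewrite !mxE (negbTE nir) mulr0.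
Qed.

Section Invariance.
Variables (X Xp Z : M -> W -> W) (x : M) (p : bool).
Hypotheses (linXp1 : forall g, linear (Xp^~ g)) (linZ1 : forall g, linear (Z^~ g)).
Hypotheses (linXp : forall y, linear (Xp y)) (linZ : forall y, linear (Z y)).
Hypothesis linXx : linear (X x).
Hypothesis hx : homog p x.
Local Notation sg r s := ((-1) ^+ (p && (ipar r (+) ipar s)) : F).
Local Notation sbrx r s := (sbr p (ipar r (+) ipar s) x (E r s)).
Hypothesis Xp_sbr : forall r s g,
  Xp (sbrx r s) g = X x (Xp (E r s) g) - sg r s *: Xp (E r s) (X x g).
Hypothesis Z_sbr : forall r s g,
  Z (sbrx r s) g = Z x (Z (E r s) g) - sg r s *: Z (E r s) (Z x g).
Hypothesis X_Z : forall r s g, X x (Z (E r s) g) = sg r s *: Z (E r s) (X x g).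
Hypothesis Z_Xp : forall r s g, Z x (Xp (E r s) g) = sg r s *: Xp (E r s) (Z x g).

Lemma sg_pair (r s : 'I_(n + n)) : sg r s * sg s r = 1.
Proof. by rewrite addbC sign_sq. Qed.

Lemma X_casimir g : X x (casimir Xp Z g) =
  \sum_(r < n + n) \sum_(s < n + n) (-1) ^+ (ipar s) *: Xp (sbrx r s) (Z (E s r) g)
  + casimir Xp Z (X x g).
Proof.
rewrite /casimir (linfun_sum linXx) -big_split; apply: eq_bigr => r _ /=.
rewrite (linfun_sum linXx) -big_split; apply: eq_bigr => s _ /=.
have Xx_Xp h : X x (Xp (E r s) h) = Xp (sbrx r s) h + sg r s *: Xp (E r s) (X x h).
  by rewrite Xp_sbr subrK.
by rewrite (linfunZ linXx) Xx_Xp X_Z (linfunZ (linXp _)) scalerA sg_pair scale1r scalerDr.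
Qed.

Lemma Z_casimir g : Z x (casimir Xp Z g) =
  \sum_(r < n + n) \sum_(s < n + n) (-1) ^+ (ipar s) *:
      (sg r s *: Xp (E r s) (Z (sbrx s r) g))
  + casimir Xp Z (Z x g).
Proof.
rewrite /casimir (linfun_sum (linZ x)) -big_split; apply: eq_bigr => r _ /=.
rewrite (linfun_sum (linZ x)) -big_split; apply: eq_bigr => s _ /=.
have Zx_Z h : Z x (Z (E s r) h) = Z (sbrx s r) h + sg s r *: Z (E s r) (Z x h).
  by rewrite Z_sbr subrK.
rewrite (linfunZ (linZ x)) Z_Xp Zx_Z (linfunD (linXp _)) (linfunZ (linXp _)) scalerDr scalerA.
by rewrite sg_pair scale1r scalerDr.
Qed.

(* Expanding the brackets gives four triple sums which cancel in pairs after
   renaming the summation indices; the second pair needs [homog p x]. *)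
Lemma casimir_brackets_cancel g :
  \sum_(r < n + n) \sum_(s < n + n) (-1) ^+ (ipar s) *: Xp (sbrx r s) (Z (E s r) g)
  + \sum_(r < n + n) \sum_(s < n + n) (-1) ^+ (ipar s) *:
      (sg r s *: Xp (E r s) (Z (sbrx s r) g)) = 0.
Proof.
pose T1 r s := (-1) ^+ (ipar s) *:
  \sum_(u < n + n) x u r *: Xp (E u s) (Z (E s r) g).
pose T2 r s := ((-1) ^+ (ipar s) * sg r s) *:
  \sum_(v < n + n) x s v *: Xp (E r v) (Z (E s r) g).
pose T3 r s := ((-1) ^+ (ipar s) * sg r s) *:
  \sum_(u < n + n) x u s *: Xp (E r s) (Z (E u r) g).
pose T4 r s := (-1) ^+ (ipar s) *:
  \sum_(v < n + n) x r v *: Xp (E r s) (Z (E s v) g).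
rewrite -big_split /=.
rewrite (eq_bigr (fun r => (\sum_(s < n + n) T1 r s - \sum_(s < n + n) T2 r s)
     + (\sum_(s < n + n) T3 r s - \sum_(s < n + n) T4 r s))); last first.
  move=> r _; rewrite -!sumrB -big_split -[in RHS]big_split /=; apply: eq_bigr => s _ /=.
  rewrite /sbr !mulmx_delta !delta_mulmx (linfunB (linXp1 _)) (linfunB (linZ1 _)).
  rewrite (linfunZ (linXp1 _)) (linfunZ (linZ1 _)).
  rewrite !(linfun_sumZ (linXp1 _)) !(linfun_sumZ (linZ1 _)).
  rewrite (linfunB (linXp _)) (linfunZ (linXp _)) !(linfun_sumZ (linXp _)).
  rewrite /T1 /T2 /T3 /T4 scalerBr scalerA scalerBr scalerA.
  by rewrite sg_pair scale1r scalerBr scalerA.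
have T14 : \sum_(r < n + n) \sum_(s < n + n) T1 r s
         = \sum_(r < n + n) \sum_(s < n + n) T4 r s.
  transitivity (\sum_(r < n + n) \sum_(s < n + n) \sum_(u < n + n)
     ((-1) ^+ (ipar s) * x u r) *: Xp (E u s) (Z (E s r) g)).
    apply: eq_bigr => r _; apply: eq_bigr => s _; rewrite /T1 scaler_sumr.
    by apply: eq_bigr => u _; rewrite scalerA.
  rewrite exchange_big /=; under eq_bigr do rewrite exchange_big /=.
  rewrite exchange_big; apply: eq_bigr => u _; apply: eq_bigr => s _.
  by rewrite /T4 scaler_sumr; apply: eq_bigr => r _; rewrite scalerA.
have T23 : \sum_(r < n + n) \sum_(s < n + n) T2 r s
         = \sum_(r < n + n) \sum_(s < n + n) T3 r s.
  transitivity (\sum_(r < n + n) \sum_(s < n + n) \sum_(v < n + n)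
     ((-1) ^+ (ipar s) * sg r s * x s v) *: Xp (E r v) (Z (E s r) g)).
    apply: eq_bigr => r _; apply: eq_bigr => s _; rewrite /T2 scaler_sumr.
    by apply: eq_bigr => v _; rewrite scalerA.
  symmetry.
  transitivity (\sum_(r < n + n) \sum_(s < n + n) \sum_(u < n + n)
     ((-1) ^+ (ipar s) * sg r s * x u s) *: Xp (E r s) (Z (E u r) g)).
    apply: eq_bigr => r _; apply: eq_bigr => s _; rewrite /T3 scaler_sumr.
    by apply: eq_bigr => v _; rewrite scalerA.
  apply: eq_bigr => r _; rewrite exchange_big; apply: eq_bigr => s _.
  apply: eq_bigr => v _; congr (_ *: _).
  case: (eqVneq (ipar s (+) ipar v) p) => [hp | /hx ->]; last by rewrite !mulr0.
  by rewrite -hp; case: (ipar r); case: (ipar s); case: (ipar v) => /=; ring.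
by rewrite big_split !sumrB /= T14 T23 addrA subrK subrr.
Qed.

Lemma casimir_invariant g :
  X x (casimir Xp Z g) + Z x (casimir Xp Z g) = casimir Xp Z (X x g + Z x g).
Proof.
rewrite X_casimir Z_casimir (linfunD (casimir_linear linXp linZ)) addrACA.
by rewrite casimir_brackets_cancel add0r.
Qed.

End Invariance.
End Casimir.

Lemma sum_triangle (V : zmodType) (n : nat) (G : 'I_n -> 'I_n -> V) :
  \sum_(i < n) \sum_(j < n) G i j = \sum_(i < n) G i i
    + \sum_(i < n) \sum_(j < n | (i < j)%N) G i j
    + \sum_(i < n) \sum_(j < n | (i < j)%N) G j i.
Proof.
have split_row i : \sum_(j < n) G i j
   = G i i + \sum_(j < n | (i < j)%N) G i j + \sum_(j < n | (j < i)%N) G i j.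
  rewrite (bigD1 i) //= (bigID (fun j : 'I_n => (i < j)%N)) /= -addrA.
  by congr (_ + (_ + _)); apply: eq_bigl => j; rewrite -val_eqE /=; case: ltngtP.
rewrite (eq_bigr _ (fun i _ => split_row i)) !big_split /=; congr (_ + _).
rewrite (eq_bigr (fun i : 'I_n => \sum_(j < n) if (j < i)%N then G i j else 0));
  last by move=> i _; rewrite big_mkcond.
by rewrite exchange_big /=; apply: eq_bigr => j _; rewrite [RHS]big_mkcond.
Qed.

Section OmegaCasimir.
Variables (F : fieldType) (n : nat) (W : lmodType F).
Local Notation M := 'M[F]_(n + n).
Local Notation E := (@delta_mx F (n + n) (n + n)).
Hypothesis two_neq0 : (2%:R : F) != 0.
Variables (X Z : M -> W -> W).
Hypothesis linX1 : forall c y z g, in_pn y -> in_pn z -> X (c *: y + z) g = c *: X y g + X z g.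
Hypothesis linZ1 : forall g, linear (Z^~ g).
Hypothesis linX : forall y, linear (X y).

Lemma X0 g : X 0 g = 0.
Proof.
have h := linX1 1 g in_pn0 in_pn0; rewrite !scale1r !addr0 in h.
by apply: (addrI (X 0 g)); rewrite addr0 -h.
Qed.

Lemma XN y g : in_pn y -> X (- y) g = - X y g.
Proof.
move=> py; have := linX1 (-1) g py in_pn0.
by rewrite addr0 scaleN1r X0 addr0 => ->; rewrite scaleN1r.
Qed.

Local Notation XZ y z f := (X y (Z z f)).

Lemma casimir_tau_sym_split f : casimir (fun y => X (tau_sym y)) Z f =
  \sum_(i < n) \sum_(j < n) (XZ (Am F i j) (E (ev j) (ev i)) f
                             - XZ (Bp F i j) (E (od j) (ev i)) f)
  + \sum_(i < n) \sum_(j < n) (XZ (Cm F i j) (E (ev j) (od i)) f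
                             + XZ (Am F j i) (E (od j) (od i)) f).
Proof.
rewrite /casimir sum_ev_od; congr (_ + _); apply: eq_bigr => i _;
  rewrite sum_ev_od -big_split /=; apply: eq_bigr => j _;
  rewrite ipar_ev ipar_od expr0 expr1 scale1r scaleN1r.
  by rewrite tau_sym_ee tau_sym_eo.
by rewrite tau_sym_oe tau_sym_oo XN ?opprK //; apply: in_pn_Am.
Qed.

Lemma Omega_Apart f : \sum_(i < n) \sum_(j < n) XZ (Am F i j) (Ap F j i) f
  = \sum_(i < n) \sum_(j < n) XZ (Am F i j) (E (ev j) (ev i)) f
  + \sum_(i < n) \sum_(j < n) XZ (Am F j i) (E (od j) (od i)) f.
Proof.
rewrite [X in _ = _ + X]exchange_big -big_split; apply: eq_bigr => i _.
rewrite -big_split; apply: eq_bigr => j _ /=.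
by rewrite /Ap /Emu (linfunD (linZ1 _)) (linfunD (linX _)).
Qed.

Lemma Omega_Bpart f : 2%:R^-1 *: \sum_(i < n) XZ (Bp F i i) (Cp F i i) f
  + \sum_(i < n) \sum_(j < n | (i < j)%N) XZ (Bp F i j) (Cp F j i) f
  = \sum_(i < n) \sum_(j < n) XZ (Bp F i j) (E (od j) (ev i)) f.
Proof.
rewrite (sum_triangle (fun i j => XZ (Bp F i j) (E (od j) (ev i)) f)) /= -addrA.
congr (_ + _).
  have -> : \sum_(i < n) XZ (Bp F i i) (Cp F i i) f
      = 2%:R *: \sum_(i < n) XZ (Bp F i i) (E (od i) (ev i)) f.
    rewrite scaler_sumr; apply: eq_bigr => i _.
    by rewrite /Cp /Emu (linfunD (linZ1 _)) (linfunD (linX _)) scaler_nat mulr2n.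
  by rewrite scalerA mulVf // scale1r.
rewrite -big_split; apply: eq_bigr => i _; rewrite -big_split; apply: eq_bigr => j _ /=.
rewrite /Cp /Emu (linfunD (linZ1 _)) (linfunD (linX _)); congr (_ + _).
by rewrite /Bp /Emu addrC.
Qed.

Lemma Omega_Cpart f : \sum_(i < n) \sum_(j < n | (i < j)%N) XZ (Cm F i j) (Bm F j i) f
  = \sum_(i < n) \sum_(j < n) XZ (Cm F i j) (E (ev j) (od i)) f.
Proof.
rewrite (sum_triangle (fun i j => XZ (Cm F i j) (E (ev j) (od i)) f)) /=.
have -> : \sum_(i < n) XZ (Cm F i i) (E (ev i) (od i)) f = 0.
  by rewrite big1 // => i _; rewrite /Cm subrr X0.
rewrite add0r.
rewrite -big_split; apply: eq_bigr => i _; rewrite -big_split; apply: eq_bigr => j _ /=.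
rewrite /Bm /Emu (linfunB (linZ1 _)) (linfunB (linX _)); congr (_ + _).
have -> : Cm F i j = - Cm F j i by rewrite /Cm opprB.
by rewrite XN ?opprK //; apply: in_pn_Cm.
Qed.

Lemma Omega_casimir f : Omega_op X Z f = casimir (fun y => X (tau_sym y)) Z f.
Proof.
rewrite /Omega_op casimir_tau_sym_split -[_ - _ - _]addrA -opprD.
rewrite Omega_Bpart Omega_Apart Omega_Cpart.
have regroup (x1 x2 x3 x4 : W) : x1 + x2 - x3 + x4 = x1 - x3 + (x4 + x2).
  by rewrite -!addrA; congr (_ + _); rewrite addrC -addrA.
rewrite regroup; congr (_ + _).
  by rewrite -sumrB; apply: eq_bigr => i _; rewrite sumrB.
by rewrite -big_split; apply: eq_bigr => i _; rewrite big_split.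
Qed.

End OmegaCasimir.

Section TensorSpace.
Variables (F : fieldType) (n : nat) (M0 M1 : lmodType F) (a : nat).
Local Notation M := 'M[F]_(n + n).
Local Notation SM := (M0 * M1)%type.
Local Notation TSa := (TS n M0 M1 a).
Local Notation idx := {ffun 'I_a -> 'I_(n + n)}.

Lemma sigmaM_linear : linear (@sigmaM F M0 M1).
Proof. by move=> c [m1 m2] [m1' m2']; congr (_, _); rewrite /= scalerN opprD. Qed.

Lemma sigmaMK : involutive (@sigmaM F M0 M1).
Proof. by case=> m1 m2; rewrite /sigmaM /= opprK. Qed.

Definition ksign (odd : bool) (s : F) (m : SM) : SM := if odd then s *: sigmaM m else m.

Lemma ksign_linear b s : linear (ksign b s).
Proof. by move=> c m m'; case: b => //=; rewrite sigmaM_linear scalerDr !scalerA mulrC. Qed.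

Lemma ksignK b c s m : s * s = 1 -> ksign b s (ksign c s m) = ksign (b (+) c) s m.
Proof.
by move=> ss; case: b; case: c => //=; rewrite (linfunZ sigmaM_linear) sigmaMK scalerA ss scale1r.
Qed.

Lemma ksignC b c s s' m : ksign b s (ksign c s' m) = ksign c s' (ksign b s m).
Proof. by case: b; case: c => //=; rewrite !(linfunZ sigmaM_linear) !scalerA mulrC. Qed.

Lemma ksignMsign c s (b : bool) m :
  ksign c (s * (-1) ^+ b) m = (-1) ^+ (b && c) *: ksign c s m.
Proof. by case: c => /=; rewrite ?andbT ?andbF ?expr0 ?scale1r // scalerA mulrC. Qed.

Lemma updE (w : idx) t k s : upd w t k s = if s == t then k else w s.
Proof. by rewrite ffunE. Qed.
Lemma upd_same (w : idx) t k : upd w t k t = k.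
Proof. by rewrite updE eqxx. Qed.
Lemma upd_other (w : idx) t k s : s != t -> upd w t k s = w s.
Proof. by move=> /negbTE h; rewrite updE h. Qed.
Lemma upd_upd (w : idx) t k l : upd (upd w t k) t l = upd w t l.
Proof. by apply/ffunP => s; rewrite !updE; case: eqP. Qed.
Lemma upd_comm (w : idx) t t' k l : t != t' ->
  upd (upd w t k) t' l = upd (upd w t' l) t k.
Proof.
move=> ntt; apply/ffunP => s; rewrite !updE.
by case: (eqVneq s t) => [->|//]; rewrite (negbTE ntt).
Qed.

Lemma sgn_before_sq (w : idx) t : sgn_before F w t * sgn_before F w t = 1.
Proof.
apply: (big_ind (fun z : F => z * z = 1)); first by rewrite mulr1.
  by move=> x y hx hy; rewrite mulrACA hx hy mulr1.
by move=> s _; rewrite sign_sq.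
Qed.

Lemma sgn_before_upd_ge (w : idx) (t t' : 'I_a) k : (t' <= t)%N ->
  sgn_before F (upd w t k) t' = sgn_before F w t'.
Proof.
move=> le; apply: eq_bigr => s hs; rewrite upd_other //.
by apply: contraTneq hs => ->; rewrite -leqNgt.
Qed.

Lemma sgn_before_upd_lt (w : idx) (t t' : 'I_a) k : (t < t')%N ->
  sgn_before F (upd w t k) t' = (-1) ^+ (ipar (w t) (+) ipar k) * sgn_before F w t'.
Proof.
move=> lt; rewrite /sgn_before (bigD1 t) //= [in RHS](bigD1 t) //= upd_same.
rewrite (eq_bigr (fun s => (-1) ^+ ipar (w s))); last first.
  by move=> s /andP [_ hs]; rewrite upd_other.
rewrite signr_addb; set B := (-1) ^+ ipar (w t).
by rewrite [B * _]mulrC -mulrA [B * (B * _)]mulrA sign_sq mul1r.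
Qed.

Lemma tsD (f g : TSa) w : (f + g) w = f w + g w. Proof. by rewrite ffunE. Qed.
Lemma tsZ c (f : TSa) w : (c *: f) w = c *: f w. Proof. by rewrite ffunE. Qed.
Lemma tsN (f : TSa) w : (- f) w = - f w. Proof. by rewrite ffunE. Qed.

Lemma actME (rho : M -> SM -> SM) x (f : TSa) w : actM rho x f w = rho x (f w).
Proof. by rewrite ffunE. Qed.

Lemma act_homE (y : M) b (t : 'I_a) (f : TSa) w :
  act_hom y b t f w = \sum_(k < n + n) y (w t) k *: ksign b (sgn_before F w t) (f (upd w t k)).
Proof. by rewrite ffunE. Qed.

Lemma act_hom_linear (y : M) b (t : 'I_a) : linear (act_hom (M0:=M0) (M1:=M1) y b t).
Proof.
move=> c f g; apply/ffunP => w; rewrite tsD tsZ !act_homE scaler_sumr -big_split.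
by apply: eq_bigr => k _ /=; rewrite tsD tsZ (ksign_linear b) scalerDr !scalerA mulrC.
Qed.

Lemma act_hom_linear_mx b (t : 'I_a) (f : TSa) : linear (fun y : M => act_hom y b t f).
Proof.
move=> c y z; apply/ffunP => w; rewrite tsD tsZ !act_homE scaler_sumr -big_split.
by apply: eq_bigr => k _ /=; rewrite !mxE scalerDl scalerA.
Qed.

Lemma act_homM (y z : M) b c (t : 'I_a) (f : TSa) :
  act_hom y b t (act_hom z c t f) = act_hom (y *m z) (b (+) c) t f.
Proof.
apply/ffunP => w; rewrite !act_homE.
transitivity (\sum_(k < n + n) \sum_(l < n + n) (y (w t) k * z k l) *:
   ksign b (sgn_before F w t) (ksign c (sgn_before F w t) (f (upd w t l)))).
  apply: eq_bigr => k _; rewrite act_homE upd_same sgn_before_upd_ge //.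
  rewrite (linfun_sumZ (ksign_linear _ _)) scaler_sumr.
  by apply: eq_bigr => l _; rewrite upd_upd scalerA.
rewrite exchange_big; apply: eq_bigr => l _; rewrite mxE scaler_suml.
by apply: eq_bigr => k _; rewrite ksignK ?sgn_before_sq.
Qed.

Lemma act_hom_supercomm (y z : M) b c (t t' : 'I_a) (f : TSa) :
  (t < t')%N -> homog b y ->
  act_hom y b t (act_hom z c t' f) = (-1) ^+ (b && c) *: act_hom z c t' (act_hom y b t f).
Proof.
move=> lt hy; have ntt : t != t' by rewrite neq_ltn lt.
have nt't : t' != t by rewrite eq_sym.
apply/ffunP => w; rewrite tsZ !act_homE.
transitivity (\sum_(k < n + n) \sum_(l < n + n) (y (w t) k * z (w t') l) *:
   ksign b (sgn_before F w t) (ksign c (sgn_before F (upd w t k) t')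
      (f (upd (upd w t k) t' l)))).
  apply: eq_bigr => k _; rewrite act_homE upd_other //.
  rewrite (linfun_sumZ (ksign_linear _ _)) scaler_sumr.
  by apply: eq_bigr => l _; rewrite scalerA.
rewrite scaler_sumr exchange_big; apply: eq_bigr => l _.
rewrite act_homE upd_other // (sgn_before_upd_ge _ _ (ltnW lt)).
rewrite (linfun_sumZ (ksign_linear _ _)) !scaler_sumr; apply: eq_bigr => k _.
rewrite upd_comm //.
case: (eqVneq (ipar (w t) (+) ipar k) b) => [hb | /hy ->]; last first.
  by rewrite mul0r !scale0r !scaler0.
rewrite sgn_before_upd_lt // hb [(-1) ^+ b * _]mulrC ksignMsign.
rewrite (linfunZ (ksign_linear _ _)) ksignC !scalerA.
by rewrite [y (w t) k * _]mulrC [_ * (-1) ^+ (b && c)]mulrC mulrA.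
Qed.

Lemma actM_act_hom (rho : M -> SM -> SM) x (p : bool) :
  linear (rho x) -> (forall m, rho x (sigmaM m) = (-1) ^+ p *: sigmaM (rho x m)) ->
  forall (z : M) c (t : 'I_a) (f : TSa),
  actM rho x (act_hom z c t f) = (-1) ^+ (p && c) *: act_hom z c t (actM rho x f).
Proof.
move=> linx rho_sigma z c t f; apply/ffunP => w.
rewrite tsZ actME !act_homE (linfun_sumZ linx) scaler_sumr.
apply: eq_bigr => k _; rewrite actME scalerA mulrC -scalerA; congr (_ *: _).
case: c => /=; last by rewrite andbF expr0 scale1r.
by rewrite (linfunZ linx) rho_sigma andbT !scalerA mulrC.
Qed.

Lemma actV_linear_mx (t : 'I_a) (f : TSa) : linear (fun y : M => actV y t f).
Proof.
move=> c y z; rewrite /actV evpart_linear oddpart_linear !act_hom_linear_mx.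
by rewrite scalerDr addrACA.
Qed.

Lemma actV_linear (y : M) (t : 'I_a) : linear (actV (M0:=M0) (M1:=M1) y t).
Proof. by move=> c f g; rewrite /actV !act_hom_linear scalerDr addrACA. Qed.

Lemma actV_homog b (y : M) (t : 'I_a) (f : TSa) : homog b y -> actV y t f = act_hom y b t f.
Proof.
have act0 c : act_hom (0 : M) c t f = 0 by apply: (linfun0 (act_hom_linear_mx _ _ _)).
case: b => hy; rewrite /actV /oddpart.
  by rewrite evpart_odd // act0 add0r subr0.
by rewrite evpart_even // subrr act0 addr0.
Qed.

End TensorSpace.

Section FactorActions.
Variables (F : fieldType) (n : nat) (M0 M1 : lmodType F) (a : nat).
Local Notation M := 'M[F]_(n + n).
Local Notation SM := (M0 * M1)%type.
Local Notation TSa := (TS n M0 M1 a).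
Variable rho : M -> SM -> SM.
Hypothesis rhoP : is_pn_supermodule rho.

Lemma rho_linear x : linear (rho x).
Proof. by case: rhoP => h _ _ _ _; apply: h. Qed.

Lemma rho_linear_pn c x y m : in_pn x -> in_pn y ->
  rho (c *: x + y) m = c *: rho x m + rho y m.
Proof. by case: rhoP => _ h _ _ _; apply: h. Qed.

Lemma rho_sbr p q x y m : in_pn x -> in_pn y -> homog p x -> homog q y ->
  rho (sbr p q x y) m = rho x (rho y m) - (-1) ^+ (p && q) *: rho y (rho x m).
Proof. by case: rhoP => _ _ _ _ h; apply: h. Qed.

Lemma rho_sigmaM x p : in_pn x -> homog p x ->
  forall m, rho x (sigmaM m) = (-1) ^+ p *: sigmaM (rho x m).
Proof.
move=> px hx [m1 m2].
have eN : sigmaM (m1, m2) = (-1) *: ((0 : M0), m2) + (m1, (0 : M1)).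
  by congr (_, _); rewrite /= ?scaler0 ?add0r ?scaleN1r ?addr0.
have e1 : (m1, m2) = 1 *: ((0 : M0), m2) + (m1, (0 : M1)).
  by congr (_, _); rewrite /= ?scaler0 ?add0r ?scale1r ?addr0.
rewrite eN e1 !rho_linear; case: rhoP => _ _ even odd _.
case: p hx => hx; [have [r1 r2] := odd x px hx | have [r1 r2] := even x px hx];
  move: (r1 m1) (r2 m2); case: (rho x (m1, 0)) => A1 A2;
  case: (rho x (0, m2)) => B1 B2 /= -> ->; congr (_, _);
  by rewrite /= ?expr1 ?expr0 ?scaler0 ?addr0 ?add0r ?scale1r ?scaleN1r ?opprK.
Qed.

(* Tensor factors are indexed by [option 'I_a]: [None] is the module [M] and
   [Some t] is the copy of [V] at position [t]. *)
Definition act_factor (i : option 'I_a) (y : M) : TSa -> TSa :=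
  if i is Some t then actV y t else actM rho y.

(* [rho] is only constrained on p(n). *)
Definition factor_dom (i : option 'I_a) (y : M) : Prop := if i is None then in_pn y else True.

Lemma factor_dom_pn i y : in_pn y -> factor_dom i y.
Proof. by case: i. Qed.

Lemma act_factor_linear i y : linear (act_factor i y).
Proof.
case: i => [t|] /=; first exact: actV_linear.
by move=> c f g; apply/ffunP => w; rewrite actME !tsD !tsZ !actME rho_linear.
Qed.

Lemma act_factor_linear_mx i c (y z : M) f : factor_dom i y -> factor_dom i z ->
  act_factor i (c *: y + z) f = c *: act_factor i y f + act_factor i z f.
Proof.
case: i => [t|] /= dy dz; first exact: actV_linear_mx.
by apply/ffunP => w; rewrite tsD tsZ !actME rho_linear_pn.
Qed.

Lemma act_factor_supercomm i j (y z : M) p q f :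
  i != j -> homog p y -> homog q z -> factor_dom i y -> factor_dom j z ->
  act_factor i y (act_factor j z f) = (-1) ^+ (p && q) *: act_factor j z (act_factor i y f).
Proof.
have swap_sign (g h : TSa) : g = (-1) ^+ (q && p) *: h -> h = (-1) ^+ (p && q) *: g.
  by move=> ->; rewrite scalerA andbC sign_sq scale1r.
case: i => [t|]; case: j => [t'|] //= nij hy hz dy dz.
- rewrite !(actV_homog _ _ hy) !(actV_homog _ _ hz).
  have ntt : t != t' by apply: contraNneq nij => ->.
  case: (ltngtP t t') => [lt|gt|eq]; first exact: act_hom_supercomm.
    by apply: swap_sign; apply: act_hom_supercomm.
  by move/val_inj: eq ntt => ->; rewrite eqxx.
- rewrite !(actV_homog _ _ hy); apply: swap_sign.
  by apply: actM_act_hom; [apply: rho_linear | apply: rho_sigmaM].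
- rewrite !(actV_homog _ _ hz).
  by apply: actM_act_hom; [apply: rho_linear | apply: rho_sigmaM].
Qed.

Lemma act_factor_sbr i (y z : M) p q f :
  homog p y -> homog q z -> factor_dom i y -> factor_dom i z ->
  act_factor i (sbr p q y z) f
  = act_factor i y (act_factor i z f) - (-1) ^+ (p && q) *: act_factor i z (act_factor i y f).
Proof.
case: i => [t|] /= hy hz dy dz; last first.
  by apply/ffunP => w; rewrite tsD tsN tsZ !actME rho_sbr.
rewrite (actV_homog _ _ (homog_sbr hy hz)) !(actV_homog _ _ hz) !(actV_homog _ _ hy).
rewrite !act_homM [q (+) p]addbC /sbr addrC -scaleNr.
by rewrite (act_hom_linear_mx _ _ _ (- _)) scaleNr addrC.
Qed.

End FactorActions.

Section JucysMurphy.
Variables (F : fieldType) (n : nat) (M0 M1 : lmodType F) (a : nat).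
Local Notation M := 'M[F]_(n + n).
Local Notation SM := (M0 * M1)%type.
Local Notation TSa := (TS n M0 M1 a).
Local Notation E := (@delta_mx F (n + n) (n + n)).
Variable rho : M -> SM -> SM.
Hypothesis rhoP : is_pn_supermodule rho.
Hypothesis two_neq0 : (2%:R : F) != 0.

Local Notation act := (act_factor rho).

Definition factor_lt (m : nat) (i : option 'I_a) : bool := if i is Some s then (s < m)%N else true.

(* The diagonal action of [y] on the tensor factors [0, ..., m]; position [s]
   of the tuple is factor [s + 1]. *)
Definition diag_act (m : nat) (y : M) (g : TSa) : TSa := \sum_(i | factor_lt m i) act i y g.

Lemma diag_act_linear m y : linear (diag_act m y).
Proof.
move=> c f g; rewrite /diag_act scaler_sumr -big_split; apply: eq_bigr => i _ /=.
exact: (act_factor_linear rhoP).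
Qed.

Lemma diag_act_linear_pn m c y z g : in_pn y -> in_pn z ->
  diag_act m (c *: y + z) g = c *: diag_act m y g + diag_act m z g.
Proof.
move=> py pz; rewrite /diag_act scaler_sumr -big_split; apply: eq_bigr => i _ /=.
by apply: (act_factor_linear_mx rhoP); apply: factor_dom_pn.
Qed.

Lemma diag_act_sbr m y z p q g : homog p y -> homog q z -> in_pn y -> in_pn z ->
  diag_act m (sbr p q y z) g
  = diag_act m y (diag_act m z g) - (-1) ^+ (p && q) *: diag_act m z (diag_act m y g).
Proof.
move=> hy hz py pz; rewrite /diag_act.
have -> : \sum_(i | factor_lt m i) act i y (\sum_(j | factor_lt m j) act j z g)
   = \sum_(i | factor_lt m i) \sum_(j | factor_lt m j) act i y (act j z g).
  by apply: eq_bigr => i _; rewrite (linfun_sum (act_factor_linear rhoP i y)).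
have -> : \sum_(j | factor_lt m j) act j z (\sum_(i | factor_lt m i) act i y g)
   = \sum_(i | factor_lt m i) \sum_(j | factor_lt m j) act j z (act i y g).
  rewrite exchange_big; apply: eq_bigr => j _.
  by rewrite (linfun_sum (act_factor_linear rhoP j z)).
rewrite scaler_sumr -sumrB; apply: eq_bigr => i lt_i.
rewrite scaler_sumr -sumrB (bigD1 i) //= big1 ?addr0 => [|j /andP [_ nji]].
  by apply: (act_factor_sbr rhoP) => //; apply: factor_dom_pn.
rewrite (act_factor_supercomm rhoP g _ hy hz) ?subrr //;
  by [rewrite eq_sym | apply: factor_dom_pn].
Qed.

Lemma diag_act_supercomm m y z p q (s : 'I_a) g :
  (m <= s)%N -> homog p y -> homog q z -> in_pn y ->
  diag_act m y (actV z s g) = (-1) ^+ (p && q) *: actV z s (diag_act m y g).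
Proof.
move=> ms hy hz py; rewrite /diag_act (linfun_sum (actV_linear z s)) scaler_sumr.
apply: eq_bigr => i lt_i.
apply: (act_factor_supercomm rhoP (j := Some s)) => //; last exact: factor_dom_pn.
case: i lt_i => [s'|] //= lt; apply/eqP => -[e]; move: lt; rewrite e.
by rewrite ltnNge ms.
Qed.

Lemma diag_act_succ (k : 'I_a) y g : diag_act k.+1 y g = diag_act k y g + actV y k g.
Proof.
rewrite /diag_act (bigD1 (Some k)) /= ?ltnSn // addrC; congr (_ + _).
apply: eq_bigl => -[s|] //=.
by rewrite ltnS ltn_neqAle andbC; congr (_ && _).
Qed.

Lemma diag_act_split (k : 'I_a) (j : nat) y g : (k < j)%N ->
  diag_act j y g = diag_act k.+1 y g
                   + \sum_(i | factor_lt j i && ~~ factor_lt k.+1 i) act i y g.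
Proof.
move=> kj; rewrite /diag_act (bigID (factor_lt k.+1)) /=; congr (_ + _).
apply: eq_bigl => -[s|] //=; rewrite andb_idl // => h.
exact: leq_trans h kj.
Qed.

Lemma big_option (V : zmodType) (t0 : 'I_a) (P : pred (option 'I_a))
    (G : option 'I_a -> V) :
  P None -> \sum_(i | P i) G i = G None + \sum_(s | P (Some s)) G (Some s).
Proof.
move=> PN; rewrite (bigD1 None) //=; congr (_ + _).
rewrite (reindex_onto Some (odflt t0)) /=; last by case=> [s|] // /andP [].
by apply: eq_bigl => s; rewrite eqxx !andbT.
Qed.

Lemma Omega_op_sumL (P : pred (option 'I_a)) (B : option 'I_a -> M -> TSa -> TSa)
    (Z : M -> TSa -> TSa) f :
  Omega_op (fun x g => \sum_(i | P i) B i x g) Z f = \sum_(i | P i) Omega_op (B i) Z f.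
Proof.
rewrite /Omega_op big_split sumrB sumrB /=.
congr (_ - _ - _ + _); last 3 first.
- by rewrite exchange_big scaler_sumr.
all: by under eq_bigr do rewrite exchange_big; rewrite exchange_big.
Qed.

Lemma Yop_casimir (t : 'I_a) (f : TSa) :
  Yop rho t f = casimir (fun y => diag_act t (tau_sym y)) (fun y => actV y t) f.
Proof.
have -> : Yop rho t f = Omega_op (diag_act t) (fun y => actV y t) f.
  by rewrite /diag_act Omega_op_sumL (big_option t).
apply: Omega_casimir => //.
- by move=> c y z g; apply: diag_act_linear_pn.
- by move=> g; apply: actV_linear_mx.
- exact: diag_act_linear.
Qed.

Lemma Yop_linear (t : 'I_a) : linear (Yop rho t).
Proof.
move=> c f g; rewrite !Yop_casimir; apply: casimir_linear => y.
  exact: diag_act_linear.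
exact: actV_linear.
Qed.

(* [Yop rho k] is Y_(k+1); this is the invariance of the half Casimir. *)
Lemma Yop_diag_act_succ (k : 'I_a) y p g : homog p y -> in_pn y -> tau y = y ->
  Yop rho k (diag_act k.+1 y g) = diag_act k.+1 y (Yop rho k g).
Proof.
move=> hy py ty; rewrite !Yop_casimir !diag_act_succ; symmetry.
have homog_sym r s : homog (ipar r (+) ipar s) (tau_sym (E r s)).
  exact/homog_tau_sym/homog_delta.
apply: (casimir_invariant (X := diag_act k) (x := y) (p := p)) => //.
- by move=> h c y1 y2 /=; rewrite tau_sym_linear diag_act_linear_pn //; apply: in_pn_tau_sym.
- by move=> h; apply: actV_linear_mx.
- by move=> z; apply: diag_act_linear.
- by move=> z; apply: actV_linear.
- exact: diag_act_linear.
- move=> r s h; rewrite tau_sym_sbr //; last exact: homog_delta.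
  by apply: diag_act_sbr => //; apply: in_pn_tau_sym.
- by move=> r s h; apply: (act_factor_sbr rhoP (i := Some k)) => //; apply: homog_delta.
- by move=> r s h; apply: diag_act_supercomm => //; apply: homog_delta.
- move=> r s h; rewrite (diag_act_supercomm _ (leqnn k) (homog_sym r s) hy).
    by rewrite scalerA andbC sign_sq scale1r.
  exact: in_pn_tau_sym.
Qed.

Lemma Yop_actV (k s : 'I_a) z q g : (k < s)%N -> homog q z ->
  Yop rho k (actV z s g) = actV z s (Yop rho k g).
Proof.
move=> ks hz; rewrite !Yop_casimir /casimir (linfun_sum (actV_linear z s)).
apply: eq_bigr => r _; rewrite (linfun_sum (actV_linear z s)); apply: eq_bigr => s' _.
rewrite (linfunZ (actV_linear z s)); congr (_ *: _).
have hE : homog (ipar s' (+) ipar r) (E s' r) by exact: homog_delta.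
have hP : homog (ipar r (+) ipar s') (tau_sym (E r s')).
  exact/homog_tau_sym/homog_delta.
have -> : actV (E s' r) k (actV z s g)
    = (-1) ^+ ((ipar s' (+) ipar r) && q) *: actV z s (actV (E s' r) k g).
  apply: (act_factor_supercomm rhoP (i := Some k) (j := Some s) g _ hE hz) => //.
  by apply/eqP => -[e]; move: ks; rewrite e ltnn.
rewrite (linfunZ (diag_act_linear _ _)) (diag_act_supercomm _ (ltnW ks) hP hz).
  by rewrite scalerA addbC sign_sq scale1r.
exact: in_pn_tau_sym.
Qed.

Lemma Yop_diag_act (k : 'I_a) (j : nat) y p g :
  (k < j)%N -> homog p y -> in_pn y -> tau y = y ->
  Yop rho k (diag_act j y g) = diag_act j y (Yop rho k g).
Proof.
move=> kj hy py ty; rewrite !(diag_act_split _ _ kj) (linfunD (Yop_linear k)).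
rewrite (Yop_diag_act_succ _ _ hy py ty) (linfun_sum (Yop_linear k)); congr (_ + _).
apply: eq_bigr => -[s|] //= /andP [_ hs].
by apply: Yop_actV hy; rewrite ltnS -ltnNge in hs.
Qed.

Lemma Yop_comm_lt (k j : 'I_a) (f : TSa) : (k < j)%N ->
  Yop rho k (Yop rho j f) = Yop rho j (Yop rho k f).
Proof.
move=> kj; rewrite [Yop rho j f]Yop_casimir [Yop rho j (Yop rho k f)]Yop_casimir /casimir.
rewrite (linfun_sum (Yop_linear k)); apply: eq_bigr => r _.
rewrite (linfun_sum (Yop_linear k)); apply: eq_bigr => s _.
rewrite (linfunZ (Yop_linear k)); congr (_ *: _).
rewrite (Yop_diag_act _ kj (homog_tau_sym (homog_delta F (r := r) (s := s)))).
- by rewrite (Yop_actV _ kj (homog_delta F (r := s) (s := r))).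
- exact: in_pn_tau_sym.
- exact: tau_tau_sym.
Qed.

End JucysMurphy.

Theorem mainTheorem13 (F : numClosedFieldType) (n : nat) (M0 M1 : lmodType F)
  (rho : 'M[F]_(n + n) -> (M0 * M1)%type -> (M0 * M1)%type) (a : nat) :
  (0 < n)%N -> (0 < a)%N ->
  is_pn_supermodule rho ->
  forall (t1 t2 : 'I_a) (f : TS n M0 M1 a),
    Yop rho t1 (Yop rho t2 f) = Yop rho t2 (Yop rho t1 f).
Proof.
move=> _ _ rhoP t1 t2 f.
have two_neq0 : (2%:R : F) != 0 by rewrite pnatr_eq0.
case: (ltngtP t1 t2) => [lt|gt|/val_inj -> //].
- exact: (Yop_comm_lt rhoP two_neq0 f lt).
- by rewrite (Yop_comm_lt rhoP two_neq0 f gt).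
Qed.
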